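(* Let $h,h_*$ be functions of $x$, let $\epsilon\ge0$, and let $f_h$ be a test function with $\|f_h-T(h_*-h)\|_2\le\epsilon$ and $\|f_h\|_2>0$. Let $\Psi(h,f)=\mathbb E[(y-h(x))f(z)]$. Then $$\frac1{\|f_h\|_2}\big(\Psi(h,f_h)-\Psi(h_*,f_h)\big)\ge\|T(h-h_* )\|_2-2\epsilon.$$
   Context: $(y,x,z)$ is a random vector; $(Th)(z)=\mathbb E[h(x)\mid z]$ and $\|\cdot\|_2$ is the population $L^2$ norm. *)

From HB Require Import structures.
From mathcomp Require Import all_boot all_order all_algebra.
From mathcomp Require Import all_classical all_reals all_analysis.
Import Order.TTheory GRing.Theory Num.Theory.
Local Open Scope classical_set_scope.
Local Open Scope ring_scope.
Local Open Scope ereal_scope.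

Definition pnorm2 {d dU} {Omega : measurableType d} {U : measurableType dU}
  {R : realType} (P : probability Omega R) (u : Omega -> U) (phi : U -> R)
  : \bar R :=
  Lnorm P 2%:E (fun w => (phi (u w))%:E).

(* g : Z -> R is a version of the conditional expectation E[v | z]
   (Kolmogorov's definition): g is measurable, g(z) is integrable, and
   E[v 1_{z in B}] = E[g(z) 1_{z in B}] for every measurable B. *)
Definition is_cond_exp {d dZ} {Omega : measurableType d} {Z : measurableType dZ}
  {R : realType} (P : probability Omega R) (z : Omega -> Z) (v : Omega -> R)
  (g : Z -> R) : Prop :=
  [/\ measurable_fun setT g,
      P.-integrable setT (fun w => (g (z w))%:E) &
      forall B : set Z, measurable B ->
        \int[P]_(w in z @^-1` B) (v w)%:E
        = \int[P]_(w in z @^-1` B) (g (z w))%:E].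

Definition Psi {d dX dZ} {Omega : measurableType d} {X : measurableType dX}
  {Z : measurableType dZ} {R : realType} (P : probability Omega R)
  (y : Omega -> R) (x : Omega -> X) (z : Omega -> Z) (h : X -> R) (f : Z -> R)
  : \bar R :=
  \int[P]_w ((y w - h (x w)) * f (z w))%:E.

From HB Require Import structures.
From mathcomp Require Import all_boot all_order all_algebra.
From mathcomp Require Import all_classical all_reals all_analysis.
From mathcomp Require Import measurable_realfun lra.
Import Order.TTheory GRing.Theory Num.Theory.
Local Open Scope classical_set_scope.
Local Open Scope ring_scope.
Local Open Scope ereal_scope.

(* Write F = f_h(z), G = T(hs - h)(z) and D = F - G.  By the tower property,
   Psi(h, f_h) - Psi(hs, f_h) = E[(hs - h)(x) F] = E[G F] = ||F||^2 - E[D F],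
   which Cauchy-Schwarz bounds below by ||F|| (||F|| - ||D||).  Minkowski gives
   ||G|| <= ||F|| + ||D||, and T(h - hs) = -T(hs - h) almost surely, so after
   dividing by ||F|| we get ||T(h - hs)|| - 2 ||D|| with ||D|| <= eps.  The
   tower property is derived from the defining identity on indicators 1_B(z)
   through simple functions, monotone approximation with dominated convergence,
   and positive and negative parts. *)

Section Lfun2.
Context {d} {T : measurableType d} {R : realType}.
Context {mu : {measure set T -> \bar R}}.
Local Notation L2 := (Lfun mu 2%:E).
Local Notation N2 f := 'N[mu]_2%:E[EFin \o f].
Local Notation nm f := (fine (N2 f)).

Lemma inLfunP (p : \bar R) (f : T -> R) :
  f \in Lfun mu p <-> measurable_fun setT f /\ 'N[mu]_p[EFin \o f] < +oo.
Proof.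
rewrite !inE /=; split => [/andP[]|[mf nf]]; rewrite ?inE/=; first by split.
by apply/andP; rewrite !inE.
Qed.

Lemma LfunB [p : \bar R] [f g : T -> R] : 1 <= p ->
  f \in Lfun mu p -> g \in Lfun mu p -> (f \- g)%R \in Lfun mu p.
Proof.
by move=> p1 lf lg; apply: (Lfun_addr_closed mu p1).2 => //; rewrite rpredN.
Qed.

Lemma Lfun_Lnorm_fineK [p : \bar R] [f : T -> R] : f \in Lfun mu p ->
  (fine 'N[mu]_p[EFin \o f])%:E = 'N[mu]_p[EFin \o f].
Proof. by case/inLfunP => _ nf; rewrite fineK// ge0_fin_numE// Lnorm_ge0. Qed.

Lemma Lfun2_integrableM [f g : T -> R] : f \in L2 -> g \in L2 ->
  mu.-integrable setT (fun w => (f w * g w)%:E).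
Proof. by move=> lf lg; apply/Lfun1_integrable/Lfun2_mul_Lfun1. Qed.

Lemma Lfun2_integral_sqr [f : T -> R] : f \in L2 ->
  \int[mu]_w (f w * f w)%:E = ((nm f) ^+ 2)%:E.
Proof.
move=> lf; rewrite -powR_mulrn ?fine_ge0 ?Lnorm_ge0// -poweR_EFin.
rewrite Lfun_Lnorm_fineK// poweR_Lnorm// ?pnatr_eq0//.
by apply: eq_integral => w _; rewrite /= powR_mulrn// real_normK ?num_real.
Qed.

Lemma cauchy_schwarz [f g : T -> R] : f \in L2 -> g \in L2 ->
  `|\int[mu]_w (f w * g w)%:E| <= N2 f * N2 g.
Proof.
move=> /[dup] lf /inLfunP[mf _] /[dup] lg /inLfunP[mg _].
apply: le_trans (le_abse_integral _ _ _) _ => //.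
  exact/measurable_EFinP/measurable_funM.
by rewrite -Lnorm1; apply: hoelder => //; rewrite -div1r -splitr.
Qed.

Lemma Lnorm2_le_add_sub [f g : T -> R] : f \in L2 -> g \in L2 ->
  (nm g <= nm f + nm (f \- g))%R.
Proof.
move=> lf lg; have lfg := LfunB (lee1n 2) lf lg.
case/inLfunP: (lg) => mg _; case/inLfunP: (lfg) => mfg _.
have := lerB_DLnorm mu mg mfg (ler1n R 2).
have -> : (g \+ (f \- g))%R = f by apply/funext => w /=; rewrite subrKC.
rewrite -(Lfun_Lnorm_fineK lf) -(Lfun_Lnorm_fineK lg).
by rewrite -(Lfun_Lnorm_fineK lfg) -EFinD lee_fin.
Qed.

Lemma integral_mul_Lfun2_ge [f g : T -> R] : f \in L2 -> g \in L2 ->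
  ((nm f - nm (f \- g)%R) * nm f)%:E <= \int[mu]_w (g w * f w)%:E.
Proof.
move=> lf lg; have lfg := LfunB (lee1n 2) lf lg.
have -> : \int[mu]_w (g w * f w)%:E =
    \int[mu]_w (f w * f w)%:E - \int[mu]_w ((f w - g w) * f w)%:E.
  rewrite -integralB_EFin//; last 2 first.
  - exact: Lfun2_integrableM.
  - exact: Lfun2_integrableM lfg lf.
  by apply: eq_integral => w _; rewrite -EFinB mulrBl opprB addrC subrK.
have fin_fgf := integrable_fin_num measurableT (Lfun2_integrableM lfg lf).
have := cauchy_schwarz lfg lf.
rewrite -(Lfun_Lnorm_fineK lfg) -(Lfun_Lnorm_fineK lf).
rewrite -(fineK fin_fgf) abse_EFin lee_fin.
move/(le_trans (ler_norm _)).
by rewrite Lfun2_integral_sqr// -EFinB lee_fin mulrBl expr2 lerD2l lerN2 mulrC.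
Qed.

Lemma Lfun2_integral_mul_div_ge (f g : T -> R) (e : R) : f \in L2 -> g \in L2 ->
  N2 (f \- g)%R <= e%:E -> 0 < N2 f ->
  N2 g - (2 * e)%:E <= \int[mu]_w (g w * f w)%:E * (N2 f)^-1.
Proof.
move=> lf lg fge f0; have lfg := LfunB (lee1n 2) lf lg.
have fin_gf := integrable_fin_num measurableT (Lfun2_integrableM lg lf).
have := integral_mul_Lfun2_ge lf lg; have := Lnorm2_le_add_sub lf lg.
move: fge f0; rewrite -(Lfun_Lnorm_fineK lf) -(Lfun_Lnorm_fineK lg).
rewrite -(Lfun_Lnorm_fineK lfg).
rewrite -(fineK fin_gf) !lee_fin lte_fin => fge f0 gfg gf.
rewrite inver gt_eqF// -EFinB -EFinM lee_fin ler_pdivlMr//.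
by apply: le_trans gf; rewrite ler_pM2r//; lra.
Qed.

End Lfun2.

Lemma ae_eq_Lnorm d (T : measurableType d) (R : realType)
    (mu : {measure set T -> \bar R}) (r : R) (f g : T -> \bar R) :
  measurable_fun setT f -> measurable_fun setT g -> f = g %[ae mu] ->
  'N[mu]_r%:E[f] = 'N[mu]_r%:E[g].
Proof.
move=> mf mg fg; rewrite unlock; congr (_ `^ _).
have mpow (u : T -> \bar R) : measurable_fun setT u ->
    measurable_fun setT (fun w => `|u w| `^ r).
  move=> mu'; apply: (measurableT_comp (measurable_poweR _)) => //.
  exact: measurableT_comp.
apply: ae_eq_integral => //; [exact: mpow|exact: mpow|].
by apply: filterS fg => w /= fgw /fgw ->.
Qed.

Section integral_mul_comp.
Context {d dZ} {Omega : measurableType d} {Z : measurableType dZ}.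
Context {R : realType}.
Context {mu : {measure set Omega -> \bar R}} {z : Omega -> Z}.
Hypothesis mz : measurable_fun setT z.
Import HBNNSimple.

Lemma integral_mul_indic_comp (u : Omega -> R) (A : set Z) : measurable A ->
  \int[mu]_w (u w * \1_A (z w))%:E = \int[mu]_(w in z @^-1` A) (u w)%:E.
Proof.
move=> mA; rewrite [RHS]integral_mkcond; apply: eq_integral => w _.
rewrite patchE indicE -[w \in _]/(z w \in A).
by case: (z w \in A); rewrite ?mulr1 ?mulr0.
Qed.

Lemma integrable_mul_comp_le [u : Omega -> R] [f g : Z -> R] :
  measurable_fun setT u -> measurable_fun setT g ->
  (forall t, `|g t| <= `|f t|)%R ->
  mu.-integrable setT (fun w => (u w * f (z w))%:E) ->
  mu.-integrable setT (fun w => (u w * g (z w))%:E).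
Proof.
move=> mu' mg gf; apply: le_integrable => //.
  by apply/measurable_EFinP/measurable_funM => //; exact: measurableT_comp.
by move=> w _; rewrite /= !normrM lee_fin ler_wpM2l.
Qed.

Lemma integral_mul_nnsfun_comp (u : Omega -> R) (s : {nnsfun Z >-> R}) :
  mu.-integrable setT (EFin \o u) ->
  let r := finmap.enum_fset (fset_set (range s)) in
  \int[mu]_w (u w * s (z w))%:E =
  \sum_(i < size r)
    ((r`_i)%:E * \int[mu]_(w in z @^-1` (s @^-1` [set r`_i])) (u w)%:E).
Proof.
move=> iu r; have mu' := (measurable_EFinP _ _).1 (measurable_int _ iu).
have iind i : mu.-integrable setT
    (fun w => (u w * \1_(s @^-1` [set r`_i]) (z w))%:E).
  apply: (@integrable_mul_comp_le u (cst 1%R)) => //.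
  - move=> t; rewrite /= indicE normr1.
    by case: (_ \in _); rewrite ?normr1 ?normr0.
  - by apply: eq_integrable iu => // w _; rewrite /= mulr1.
transitivity (\int[mu]_w \sum_(i < size r)
    ((r`_i)%:E * (u w * \1_(s @^-1` [set r`_i]) (z w))%:E)).
  apply: eq_integral => w _; rewrite (fimfunEord s (z w)) mulr_sumr sumEFin.
  by congr EFin; apply: eq_bigr => i _; rewrite mulrCA.
rewrite integral_sum//; last by move=> i; exact: integrableZl.
by apply: eq_bigr => i _; rewrite integralZl// integral_mul_indic_comp.
Qed.

Lemma cvg_integral_mul_comp [u : Omega -> R] [f : Z -> R] [s : (Z -> R)^nat] :
  measurable_fun setT u ->
  (forall n, measurable_fun setT (s n)) ->
  (forall n t, 0 <= s n t <= f t)%R ->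
  (forall t, (s n t)%:E @[n --> \oo] --> (f t)%:E) ->
  mu.-integrable setT (fun w => (u w * f (z w))%:E) ->
  (fun n => \int[mu]_w (u w * s n (z w))%:E) @ \oo -->
    \int[mu]_w (u w * f (z w))%:E.
Proof.
move=> mu' ms sf cvg_sf iuf; have muf := measurable_int _ iuf.
have msz n : measurable_fun setT (fun w => (u w * s n (z w))%:E).
  by apply/measurable_EFinP/measurable_funM => //; exact: measurableT_comp.
have cvg_s : {ae mu, forall w, setT w ->
    (fun n => (u w * s n (z w))%:E) @ \oo --> (u w * f (z w))%:E}.
  apply: aeW => w _; rewrite EFinM; under eq_fun do rewrite EFinM.
  exact/cvgeZl/cvg_sf.
have dom_s : {ae mu, forall w n, setT w ->
    `|(u w * s n (z w))%:E| <= `|(u w * f (z w))%:E|}.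
  apply: aeW => w n _; have /andP[s0 sfn] := sf n (z w).
  by rewrite lee_fin !normrM ler_wpM2l// !ger0_norm// (le_trans s0).
by case: (dominated_convergence measurableT msz muf cvg_s
  (integrable_abse iuf) dom_s).
Qed.

Context {u1 u2 : Omega -> R}.
Hypotheses (i1 : mu.-integrable setT (EFin \o u1))
  (i2 : mu.-integrable setT (EFin \o u2)).
Hypothesis u12 : forall B, measurable B ->
  \int[mu]_(w in z @^-1` B) (u1 w)%:E = \int[mu]_(w in z @^-1` B) (u2 w)%:E.

Let mu1 : measurable_fun setT u1 :=
  (measurable_EFinP _ _).1 (measurable_int _ i1).
Let mu2 : measurable_fun setT u2 :=
  (measurable_EFinP _ _).1 (measurable_int _ i2).

Lemma eq_integral_mul_nnsfun_comp (s : {nnsfun Z >-> R}) :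
  \int[mu]_w (u1 w * s (z w))%:E = \int[mu]_w (u2 w * s (z w))%:E.
Proof.
rewrite !integral_mul_nnsfun_comp//.
by apply: eq_bigr => i _; rewrite u12//; exact: measurable_sfunP.
Qed.

Lemma eq_integral_mul_ge0_comp [f : Z -> R] : measurable_fun setT f ->
  (forall t, 0 <= f t)%R ->
  mu.-integrable setT (fun w => (u1 w * f (z w))%:E) ->
  mu.-integrable setT (fun w => (u2 w * f (z w))%:E) ->
  \int[mu]_w (u1 w * f (z w))%:E = \int[mu]_w (u2 w * f (z w))%:E.
Proof.
move=> mf f0 j1 j2; have mfE := (measurable_EFinP setT f).2 mf.
pose s := nnsfun_approx measurableT mfE.
have f0' t : setT t -> 0 <= (f t)%:E by rewrite lee_fin.
have ms n : measurable_fun setT (s n) by exact: measurable_funPT.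
have sf n t : (0 <= s n t <= f t)%R.
  rewrite fun_ge0 /=.
  by have := le_approx n f0' (I : setT t); rewrite /s nnsfun_approxE lee_fin.
have cvg_sf t := cvg_nnsfun_approx measurableT mfE f0' (I : setT t).
have := cvg_integral_mul_comp mu1 ms sf cvg_sf j1.
under eq_fun do rewrite eq_integral_mul_nnsfun_comp.
move/cvg_unique; apply; first exact: ereal_hausdorff.
exact: cvg_integral_mul_comp mu2 ms sf cvg_sf j2.
Qed.

Lemma eq_integral_mul_comp [f : Z -> R] : measurable_fun setT f ->
  mu.-integrable setT (fun w => (u1 w * f (z w))%:E) ->
  mu.-integrable setT (fun w => (u2 w * f (z w))%:E) ->
  \int[mu]_w (u1 w * f (z w))%:E = \int[mu]_w (u2 w * f (z w))%:E.
Proof.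
move=> mf j1 j2.
have fE t : f t = (f^\+ t - f^\- t)%R.
  by have := congr1 (fun g => g t) (funrposBneg f).
have normfE t : `|f t|%R = (f^\+ t + f^\- t)%R.
  by have := congr1 (fun g => g t) (funrposDneg f).
have pos_le t : (`|f^\+ t| <= `|f t|)%R.
  by rewrite normfE ger0_norm ?funrpos_ge0// lerDl funrneg_ge0.
have neg_le t : (`|f^\- t| <= `|f t|)%R.
  by rewrite normfE ger0_norm ?funrneg_ge0// lerDr funrpos_ge0.
have mpos := measurable_funrpos mf; have mneg := measurable_funrneg mf.
have posneg (u : Omega -> R) : measurable_fun setT u ->
    mu.-integrable setT (fun w => (u w * f (z w))%:E) ->
    [/\ mu.-integrable setT (fun w => (u w * f^\+ (z w))%:E),
        mu.-integrable setT (fun w => (u w * f^\- (z w))%:E) &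
        \int[mu]_w (u w * f (z w))%:E =
        \int[mu]_w (u w * f^\+ (z w))%:E - \int[mu]_w (u w * f^\- (z w))%:E].
  move=> mu' j; have jpos := integrable_mul_comp_le mu' mpos pos_le j.
  have jneg := integrable_mul_comp_le mu' mneg neg_le j.
  split=> //; rewrite -integralB_EFin//.
  by apply: eq_integral => w _; rewrite -EFinB -mulrBr -fE.
have [jpos1 jneg1 ->] := posneg u1 mu1 j1.
have [jpos2 jneg2 ->] := posneg u2 mu2 j2.
rewrite (eq_integral_mul_ge0_comp mpos (funrpos_ge0 f))//.
by rewrite (eq_integral_mul_ge0_comp mneg (funrneg_ge0 f)).
Qed.

End integral_mul_comp.

Lemma integralN_EFin d (T : measurableType d) (R : realType)
    (mu : {measure set T -> \bar R}) (D : set T) (f : T -> R) :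
  measurable D -> mu.-integrable D (EFin \o f) ->
  \int[mu]_(x in D) (- f x)%:E = - \int[mu]_(x in D) (f x)%:E.
Proof.
move=> mD ifD; rewrite -mulN1e -integralZl//.
by apply: eq_integral => x _; rewrite -EFinM mulN1r.
Qed.

Section cond_exp.
Context {d dZ} {Omega : measurableType d} {Z : measurableType dZ}.
Context {R : realType}.
Context {P : probability Omega R} {z : Omega -> Z}.
Hypothesis mz : measurable_fun setT z.

(* As an mfun, z has a canonical image measure [distribution P z_mfun]. *)
Let z_mfun : {mfun Omega >-> Z} :=
  HB.pack z (isMeasurableFun.Build _ _ _ _ _ mz).

Lemma is_cond_expN [v : Omega -> R] [g : Z -> R] :
  P.-integrable setT (EFin \o v) -> is_cond_exp P z v g ->
  is_cond_exp P z (fun w => - v w)%R (fun t => - g t)%R.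
Proof.
move=> iv [mg ig vg]; split.
- exact: measurable_funN.
- by apply: eq_integrable (integrableN ig) => // w _; rewrite /= EFinN.
move=> B mB; have mzB := measurable_funPTI z_mfun mB.
rewrite !integralN_EFin ?vg//; first exact: integrableS ig.
exact: integrableS iv.
Qed.

Lemma is_cond_exp_ae_unique [v : Omega -> R] [g1 g2 : Z -> R] :
  is_cond_exp P z v g1 -> is_cond_exp P z v g2 ->
  {ae P, forall w, g1 (z w) = g2 (z w)}.
Proof.
move=> [mg1 ig1 vg1] [mg2 ig2 vg2].
(* Under the image measure the defining identities of g1 and g2 hold on every
   measurable set, which is what integral_ae_eq asks for. *)
have : ae_eq (distribution P z_mfun) setT (EFin \o g1) (EFin \o g2).
  apply: integral_ae_eq => //.
  - apply: (integrable_pushforward mz) => //; exact/measurable_EFinP.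
  - exact/measurable_EFinP.
  move=> E _ mE; rewrite !integral_pushforward//; try exact/measurable_EFinP.
  + by rewrite -vg1// vg2.
  + by apply: integrableS ig2 => //; exact: (measurable_funPTI z_mfun mE).
  + by apply: integrableS ig1 => //; exact: (measurable_funPTI z_mfun mE).
case=> N [mN PN0 subN]; exists (z @^-1` N); split => //.
  exact: (measurable_funPTI z_mfun mN).
by move=> w /= g12w; apply: subN => /= /(_ I) [].
Qed.

Lemma Lnorm_is_cond_expN [v : Omega -> R] [g g' : Z -> R] (r : R) :
  P.-integrable setT (EFin \o v) -> is_cond_exp P z v g ->
  is_cond_exp P z (fun w => - v w)%R g' ->
  'N[P]_r%:E[EFin \o (g' \o z)] = 'N[P]_r%:E[EFin \o (g \o z)].
Proof.
move=> iv vg vg'; have [mg _ _] := vg; have [mg' _ _] := vg'.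
rewrite -(oppe_Lnorm _ (EFin \o (g \o z))); apply: ae_eq_Lnorm.
- exact/measurable_EFinP/measurableT_comp.
- by apply: measurableT_comp => //; exact/measurable_EFinP/measurableT_comp.
apply: filterS (is_cond_exp_ae_unique vg' (is_cond_expN iv vg)) => w /= ->.
by rewrite EFinN.
Qed.

End cond_exp.

Lemma PsiB d dX dZ (Omega : measurableType d) (X : measurableType dX)
    (Z : measurableType dZ) (R : realType) (P : probability Omega R)
    (y : Omega -> R) (x : Omega -> X) (z : Omega -> Z) (h hs : X -> R)
    (f : Z -> R) :
  P.-integrable setT (fun w => ((y w - h (x w)) * f (z w))%:E) ->
  P.-integrable setT (fun w => ((y w - hs (x w)) * f (z w))%:E) ->
  Psi P y x z h f - Psi P y x z hs f =
  \int[P]_w ((hs (x w) - h (x w)) * f (z w))%:E.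
Proof.
move=> ih ihs; rewrite /Psi -integralB_EFin//.
by apply: eq_integral => w _; rewrite -EFinB -mulrBl; congr (_ * _)%:E; lra.
Qed.

Theorem lemma4 (R : realType) (d dX dZ : measure_display)
  (Omega : measurableType d) (X : measurableType dX) (Z : measurableType dZ)
  (P : probability Omega R)
  (y : Omega -> R) (x : Omega -> X) (z : Omega -> Z)
  (h hs : X -> R) (fh : Z -> R) (eps : R)
  (Tdiff Tdiff' : Z -> R)
  (my : measurable_fun setT y) (mx : measurable_fun setT x)
  (mz : measurable_fun setT z)
  (mh : measurable_fun setT h) (mhs : measurable_fun setT hs)
  (mfh : measurable_fun setT fh)
  (y2 : Lnorm P 2%:E (fun w => (y w)%:E) < +oo)
  (h2 : pnorm2 P x h < +oo) (hs2 : pnorm2 P x hs < +oo)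
  (fh2 : pnorm2 P z fh < +oo)
  (HT : is_cond_exp P z (fun w => hs (x w) - h (x w))%R Tdiff)
  (HT' : is_cond_exp P z (fun w => h (x w) - hs (x w))%R Tdiff')
  (heps : (0 <= eps)%R)
  (hclose : pnorm2 P z (fun t => fh t - Tdiff t)%R <= eps%:E)
  (hpos : 0 < pnorm2 P z fh) :
  (Psi P y x z h fh - Psi P y x z hs fh) * (pnorm2 P z fh)^-1
    >= pnorm2 P z Tdiff' - (2 * eps)%:E.
Proof.
have ly : y \in Lfun P 2%:E by exact/inLfunP.
have lhx : h \o x \in Lfun P 2%:E.
  by apply/inLfunP; split => //; exact: measurableT_comp.
have lhsx : hs \o x \in Lfun P 2%:E.
  by apply/inLfunP; split => //; exact: measurableT_comp.
have lF : fh \o z \in Lfun P 2%:E.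
  by apply/inLfunP; split => //; exact: measurableT_comp.
have [mT iT vT] := HT.
have lD : ((fh \o z) \- (Tdiff \o z))%R \in Lfun P 2%:E.
  apply/inLfunP; split; last exact: le_lt_trans hclose (ltry _).
  by apply: measurable_funB; exact: measurableT_comp.
have lG : Tdiff \o z \in Lfun P 2%:E.
  have -> : Tdiff \o z = ((fh \o z) \- ((fh \o z) \- (Tdiff \o z)))%R.
    by apply/funext => w /=; rewrite opprB addrC subrK.
  exact: LfunB (lee1n 2) lF lD.
have lv := LfunB (lee1n 2) lhsx lhx.
have iv : P.-integrable setT (EFin \o ((hs \o x) \- (h \o x))%R).
  by apply/Lfun1_integrable/(Lfun_subset12 _ lv); rewrite fin_num_measure.
have HTN : is_cond_exp P z (fun w => - (hs (x w) - h (x w)))%R Tdiff'.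
  by move: HT'; congr is_cond_exp; apply/funext => w; rewrite opprB.
rewrite PsiB; last 2 first.
- exact: Lfun2_integrableM (LfunB (lee1n 2) ly lhx) lF.
- exact: Lfun2_integrableM (LfunB (lee1n 2) ly lhsx) lF.
rewrite (eq_integral_mul_comp mz iv iT vT mfh); last 2 first.
- exact: Lfun2_integrableM lv lF.
- exact: Lfun2_integrableM lG lF.
rewrite /pnorm2 (Lnorm_is_cond_expN mz 2 iv HT HTN).
exact: Lfun2_integral_mul_div_ge.
Qed.
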